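(* Assume (F) and (H), and let $\bar c=\lim_{\varepsilon\to0^+}c_\varepsilon^*$. Suppose that along some sequence $\varepsilon_n\to0^+$ the critical profiles $v_{\varepsilon_n}$ converge, uniformly on compact subsets of $\mathbb R$, to $\bar v=\mathcal V_L(\cdot;0,1/2)$. Explicitly, $\bar v(z)=0$ for $z<-1/2$, $\bar v(z)=z+1/2$ for $z\in[-1/2,1/2]$, and $\bar v(z)=1$ for $z>1/2$. Then $\bar c=F(1)-h(1)$, where $F(v)=\int_0^v f(s)\,ds$.
   Context: Assumptions. - (F): $f\in C([0,1])$, $f(0)=f(1)=0$, $f(s)>0$ for $s\in(0,1)$, and there is $k>0$ with $f(s)\le ks$ and $f(s)\le k(1-s)$ for all $s\in[0,1]$. - (H): $h\in C^2([0,1])$ with $h(0)=h'(0)=0$. Problems and speeds. - For $\varepsilon>0$ and $c\in\mathbb R$, a front profile is a function $v$ with $|v'|<1$, $v(0)=1/2$, satisfying $\varepsilon\big(v'/\sqrt{1-(v')^2}\big)'-(c+h'(v))v'+f(v)=0$ on $\mathbb R$, $v(-\infty)=0$, $v(+\infty)=1$, $v'>0$. - The speed $c$ is admissible if such a profile exists (equivalently, if the problem $y'=(c+h'(v))\frac{\sqrt{y(2\varepsilon+y)}}{\varepsilon+y}-f(v)$, $y(0)=y(1)=0$, $y>0$ on $(0,1)$, has a solution). - The admissible speeds form $[c_\varepsilon^*,+\infty)$, and $c_\varepsilon^*$ (the critical speed) is nondecreasing in $\varepsilon$. - The critical profile $v_\varepsilon$ is the front profile with $c=c_\varepsilon^*$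 and $v_\varepsilon(0)=1/2$. *)

From Stdlib Require Import Reals.
From Coquelicot Require Import Coquelicot.
Open Scope R_scope.

Definition hypF (f : R -> R) : Prop :=
  (forall x, 0 <= x <= 1 -> forall e, 0 < e -> exists d, 0 < d /\
      forall y, 0 <= y <= 1 -> Rabs (y - x) < d -> Rabs (f y - f x) < e) /\
  f 0 = 0 /\ f 1 = 0 /\
  (forall s, 0 < s < 1 -> 0 < f s) /\
  exists k, 0 < k /\ forall s, 0 <= s <= 1 -> f s <= k * s /\ f s <= k * (1 - s).

(* (H): h in C^2([0,1]) (i.e. h agrees on [0,1] with a C^2 function on R),
   h(0) = h'(0) = 0. *)
Definition hypH (h : R -> R) : Prop :=
  exists H : R -> R,
    (forall x, ex_derive H x) /\
    (forall x, ex_derive (Derive H) x) /\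
    (forall x, continuous (Derive (Derive H)) x) /\
    (forall x, 0 <= x <= 1 -> h x = H x) /\
    h 0 = 0 /\ Derive H 0 = 0.

Definition front_profile (f h : R -> R) (eps c : R) (v : R -> R) : Prop :=
  exists d : R -> R,
    (forall z, is_derive v z (d z)) /\
    (forall z, Rabs (d z) < 1) /\
    (forall z, 0 < d z) /\
    v 0 = 1/2 /\
    (forall z, ex_derive (fun y => d y / sqrt (1 - d y ^ 2)) z) /\
    (forall z, eps * Derive (fun y => d y / sqrt (1 - d y ^ 2)) z
               - (c + Derive h (v z)) * d z + f (v z) = 0) /\
    is_lim v m_infty 0 /\
    is_lim v p_infty 1.

Definition admissible (f h : R -> R) (eps c : R) : Prop :=
  exists v, front_profile f h eps c v.

Definition crit_speed (f h : R -> R) (eps : R) : Rbar :=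
  Glb_Rbar (admissible f h eps).

Definition critical_profile (f h : R -> R) (eps : R) (v : R -> R) : Prop :=
  exists c, crit_speed f h eps = Finite c /\ front_profile f h eps c v.

Definition crit_speed_limit (f h : R -> R) (cbar : R) : Prop :=
  forall eta, 0 < eta -> exists delta, 0 < delta /\
    forall e, 0 < e < delta ->
      exists c, crit_speed f h e = Finite c /\ Rabs (c - cbar) < eta.

Definition vbar (z : R) : R :=
  if Rlt_dec z (-(1/2)) then 0
  else if Rle_dec z (1/2) then z + 1/2 else 1.

Definition cv_loc_unif (u : nat -> R -> R) (g : R -> R) : Prop :=
  forall a b e, 0 < e -> exists N : nat, forall n, (N <= n)%nat ->
    forall z, a <= z <= b -> Rabs (u n z - g z) < e.

From Stdlib Require Import Reals Lra.
From Coquelicot Require Import Coquelicot.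
Open Scope R_scope.

(* Integrating the profile equation between a point a near -1 and a point b near 1 gives
   c (v(b) - v(a)) = eps (flux(v'(b)) - flux(v'(a))) - (h(v(b)) - h(v(a))) + int_a^b f(v),
   where flux(p) = p / sqrt(1 - p^2).  Locally uniform convergence of v to vbar makes
   v(a) and v(b) close to 0 and 1, and lets a, b be chosen (mean value theorem) where
   v' <= 1/2, so that flux(v') stays in [0, 1] and the eps-term vanishes in the limit;
   the integral tends to int_0^1 f because vbar is the identity shifted by 1/2 on
   [-1/2, 1/2].  Hence c*_eps - (F(1) - h(1)) tends to 0. *)

(* [f] is only known to be continuous on [0, 1]; [fun y => f (clamp y)] extends it
   continuously to R and agrees with it wherever a profile takes its values. *)
Definition clamp (x : R) : R := Rmax 0 (Rmin 1 x).

Definition flux (p : R) : R := p / sqrt (1 - p ^ 2).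

Lemma clamp_range x : 0 <= clamp x <= 1.
Proof. unfold clamp, Rmax, Rmin; repeat destruct Rle_dec; lra. Qed.

Lemma clamp_id x : 0 <= x <= 1 -> clamp x = x.
Proof. unfold clamp, Rmax, Rmin; repeat destruct Rle_dec; lra. Qed.

Lemma clamp_lipschitz x y : Rabs (clamp y - clamp x) <= Rabs (y - x).
Proof.
  unfold clamp, Rmax, Rmin; repeat destruct Rle_dec; unfold Rabs;
  repeat destruct Rcase_abs; lra.
Qed.

Lemma continuous_clamp x : continuous clamp x.
Proof.
  apply filterlim_locally; intros e; exists e; intros y Hy.
  exact (Rle_lt_trans _ _ _ (clamp_lipschitz x y) Hy).
Qed.

Lemma vbar_clamp z : vbar z = clamp (z + 1/2).
Proof.
  unfold vbar, clamp, Rmax, Rmin; repeat destruct Rle_dec; repeat destruct Rlt_dec; lra.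
Qed.

Lemma continuous_vbar z : continuous vbar z.
Proof.
  apply (continuous_ext (fun z => clamp (z + 1/2))); [intro; symmetry; apply vbar_clamp|].
  apply (continuous_comp (fun z => z + 1/2) clamp); [|apply continuous_clamp].
  apply (continuous_plus (fun z => z) (fun _ => 1/2));
    [apply continuous_id | apply continuous_const].
Qed.

Lemma vbar_left z : z <= -(1/2) -> vbar z = 0.
Proof. intro; rewrite vbar_clamp; unfold clamp, Rmax, Rmin; repeat destruct Rle_dec; lra. Qed.

Lemma vbar_right z : 1/2 <= z -> vbar z = 1.
Proof. intro; rewrite vbar_clamp; unfold clamp, Rmax, Rmin; repeat destruct Rle_dec; lra. Qed.

Lemma flux_bound p : 0 < p <= 1/2 -> 0 <= flux p <= 1.
Proof.
  intros Hp; unfold flux.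
  assert (Hs : 0 < sqrt (1 - p ^ 2)) by (apply sqrt_lt_R0; nra).
  assert (Hle : p <= sqrt (1 - p ^ 2)).
  { rewrite <- (sqrt_Rsqr p) at 1 by lra. apply sqrt_le_1; unfold Rsqr; nra. }
  split.
  - apply Rmult_le_pos; [lra | left; apply Rinv_0_lt_compat, Hs].
  - apply (Rmult_le_reg_r _ _ _ Hs).
    unfold Rdiv; rewrite Rmult_assoc, Rinv_l by lra; lra.
Qed.

Lemma continuous_eps_delta (g : R -> R) x : continuous g x ->
  forall eta, 0 < eta -> exists r, 0 < r /\ forall y, Rabs (y - x) < r -> Rabs (g y - g x) < eta.
Proof.
  intros Hc eta Heta.
  apply filterlim_locally with (eps := mkposreal eta Heta) in Hc.
  destruct Hc as [r Hr].
  exists r; split; [apply cond_pos | intros y Hy; exact (Hr y Hy)].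
Qed.

Lemma eq0_of_abs_le_small x K : 0 <= K ->
  (forall eta, 0 < eta <= 1/4 -> Rabs x <= K * eta) -> x = 0.
Proof.
  intros HK Hx; destruct (Req_dec x 0) as [|Hnz]; auto; exfalso.
  assert (Hpos : 0 < Rabs x) by (apply Rabs_pos_lt; exact Hnz).
  set (eta := Rmin (1/4) (Rabs x / (2 * (K + 1)))).
  assert (Heta : 0 < eta) by (apply Rmin_pos; [lra | apply Rdiv_lt_0_compat; lra]).
  assert (Hsmall : eta * (2 * (K + 1)) <= Rabs x).
  { apply (Rle_trans _ (Rabs x / (2 * (K + 1)) * (2 * (K + 1)))).
    - apply Rmult_le_compat_r; [lra | apply Rmin_r].
    - right; field; lra. }
  pose proof (Hx eta (conj Heta (Rmin_l _ _))); nra.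
Qed.

Lemma is_derive_mvt (w d : R -> R) : (forall z, is_derive w z (d z)) ->
  forall x y, x < y -> exists t, x <= t <= y /\ w y - w x = d t * (y - x).
Proof.
  intros Hd x y Hxy.
  destruct (MVT_gen w x y d) as [t [Ht Hwt]].
  - intros; apply Hd.
  - intros z _; apply continuity_pt_filterlim, (ex_derive_continuous (V:=R_NormedModule)).
    eexists; apply Hd.
  - exists t; split; auto; rewrite Rmin_left, Rmax_right in Ht; lra.
Qed.

Section ContinuousNonlinearity.

Variable f : R -> R.
Hypothesis HF : hypF f.

Lemma continuous_f_clamp x : continuous (fun y => f (clamp y)) x.
Proof.
  destruct HF as [Hc _]; apply filterlim_locally; intros e.
  destruct (Hc (clamp x) (clamp_range x) e (cond_pos e)) as [r [Hr Hfr]].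
  exists (mkposreal r Hr); intros y Hy.
  apply Hfr; [apply clamp_range|].
  exact (Rle_lt_trans _ _ _ (clamp_lipschitz x y) Hy).
Qed.

Lemma f_clamp_uniformly_continuous eta : 0 < eta -> exists s, 0 < s /\
  forall x y, Rabs (x - y) < s -> Rabs (f (clamp x) - f (clamp y)) < eta.
Proof.
  intros Heta.
  destruct (Heine_cor2 (f := fun y => f (clamp y)) (a := 0) (b := 1))
    with (eps := mkposreal eta Heta) as [s Hs].
  { intros x _; apply continuity_pt_filterlim, continuous_f_clamp. }
  exists s; split; [apply cond_pos|]; intros x y Hxy.
  rewrite <- (clamp_id (clamp x)), <- (clamp_id (clamp y)) by apply clamp_range.
  apply Hs; try apply clamp_range.
  exact (Rle_lt_trans _ _ _ (clamp_lipschitz y x) Hxy).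
Qed.

Lemma ex_RInt_f_clamp_comp (u : R -> R) a b : (forall z, continuous u z) ->
  ex_RInt (fun z => f (clamp (u z))) a b.
Proof.
  intros Hu; apply (ex_RInt_continuous (V:=R_CompleteNormedModule)); intros z _.
  apply (continuous_comp u (fun y => f (clamp y))); [apply Hu | apply continuous_f_clamp].
Qed.

Lemma RInt_f_clamp_vbar a b : a <= -(1/2) -> 1/2 <= b ->
  RInt (fun z => f (clamp (vbar z))) a b = RInt f 0 1.
Proof.
  intros Ha Hb.
  set (g := fun y => f (clamp y)).
  assert (Hg : forall a b, ex_RInt g a b) by (intros; apply (ex_RInt_f_clamp_comp id), continuous_id).
  rewrite (RInt_ext _ (fun z => scal 1 (g (1 * z + 1/2)))).
  2:{ intros x _; unfold g, scal; simpl; unfold mult; simpl.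
      rewrite vbar_clamp, (clamp_id (clamp _)) by apply clamp_range.
      rewrite !Rmult_1_l; reflexivity. }
  rewrite (RInt_comp_lin (V:=R_CompleteNormedModule)) by apply Hg.
  rewrite <- (RInt_Chasles (V:=R_CompleteNormedModule) g _ 0), <- (RInt_Chasles g 0 1) by apply Hg.
  rewrite (RInt_ext g (fun _ => 0) (1 * a + 1/2) 0), (RInt_ext g (fun _ => 0) 1 (1 * b + 1/2)),
    (RInt_ext g f 0 1).
  - rewrite !RInt_const; unfold plus, scal; simpl; unfold mult; simpl; ring.
  - intros x Hx; rewrite Rmin_left, Rmax_right in Hx by lra.
    unfold g; rewrite clamp_id; lra.
  - intros x Hx; rewrite Rmin_left, Rmax_right in Hx by lra.
    unfold g, clamp; rewrite Rmin_left, Rmax_right by lra; destruct HF as [_ [_ [? _]]]; auto.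
  - intros x Hx; rewrite Rmin_left, Rmax_right in Hx by lra.
    unfold g, clamp; rewrite Rmin_right, Rmax_left by lra; destruct HF as [_ [? _]]; auto.
Qed.

Lemma abs_RInt_f_clamp_sub_le (u v : R -> R) a b s eta : a <= b ->
  (forall z, continuous u z) -> (forall z, continuous v z) ->
  (forall x y, Rabs (x - y) < s -> Rabs (f (clamp x) - f (clamp y)) < eta) ->
  (forall z, a <= z <= b -> Rabs (u z - v z) < s) ->
  Rabs (RInt (fun z => f (clamp (u z))) a b - RInt (fun z => f (clamp (v z))) a b)
    <= (b - a) * eta.
Proof.
  intros Hab Hu Hv Hfs Huv.
  pose proof (ex_RInt_f_clamp_comp u a b Hu) as Exu.
  pose proof (ex_RInt_f_clamp_comp v a b Hv) as Exv.
  pose proof (RInt_minus (V:=R_CompleteNormedModule) _ _ a b Exu Exv) as Em.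
  unfold minus, plus, opp in Em; simpl in Em; unfold Rminus; rewrite <- Em.
  apply abs_RInt_le_const; [exact Hab | exact (ex_RInt_minus _ _ _ _ Exu Exv) |].
  intros t Ht; left; apply Hfs, Huv, Ht.
Qed.

Lemma front_speed_moduli (g : R -> R) eta : 0 < eta ->
  (forall x, continuous g x) ->
  exists s, 0 < s <= eta /\
    (forall y, Rabs (y - 1) < s -> Rabs (g y - g 1) < eta) /\
    (forall y, Rabs (y - 0) < s -> Rabs (g y - g 0) < eta) /\
    (forall x y, Rabs (x - y) < s -> Rabs (f (clamp x) - f (clamp y)) < eta).
Proof.
  intros Heta Hg.
  destruct (continuous_eps_delta g 1 (Hg 1) eta Heta) as [r1 [Hr1 Hg1]].
  destruct (continuous_eps_delta g 0 (Hg 0) eta Heta) as [r0 [Hr0 Hg0]].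
  destruct (f_clamp_uniformly_continuous eta Heta) as [r2 [Hr2 Hfs]].
  exists (Rmin (Rmin eta r1) (Rmin r0 r2)).
  pose proof (Rmin_l (Rmin eta r1) (Rmin r0 r2)); pose proof (Rmin_r (Rmin eta r1) (Rmin r0 r2)).
  pose proof (Rmin_l eta r1); pose proof (Rmin_r eta r1).
  pose proof (Rmin_l r0 r2); pose proof (Rmin_r r0 r2).
  repeat split; [repeat apply Rmin_pos; assumption | lra | ..]; intros.
  - apply Hg1; lra.
  - apply Hg0; lra.
  - apply Hfs; lra.
Qed.

End ContinuousNonlinearity.

Lemma is_lim_seq_0_eventually_lt (u : nat -> R) r : is_lim_seq u 0 -> 0 < r ->
  exists N, forall n, (N <= n)%nat -> u n < r.
Proof.
  intros Hu Hr; destruct (proj2 (is_lim_seq_spec u 0) Hu (mkposreal r Hr)) as [N HN].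
  exists N; intros n Hn; pose proof (HN n Hn) as Hun; simpl in Hun.
  rewrite Rminus_0_r in Hun; pose proof (Rle_abs (u n)); lra.
Qed.

Section FrontProfile.

Variables (f h H : R -> R) (e c : R) (w d : R -> R).
Hypothesis HF : hypF f.
Hypothesis HH : forall x, ex_derive H x.
Hypothesis Hh : forall x, 0 <= x <= 1 -> h x = H x.
Hypothesis Hw : forall z, is_derive w z (d z).
Hypothesis Hd : forall z, 0 < d z.
Hypothesis Hflux : forall z, ex_derive (fun y => flux (d y)) z.
Hypothesis Hode : forall z,
  e * Derive (fun y => flux (d y)) z - (c + Derive h (w z)) * d z + f (w z) = 0.
Hypothesis Hminus : is_lim w m_infty 0.
Hypothesis Hplus : is_lim w p_infty 1.

Lemma continuous_front z : continuous w z.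
Proof. apply (ex_derive_continuous (V:=R_NormedModule)); eexists; apply Hw. Qed.

Lemma front_increasing x y : x < y -> w x < w y.
Proof.
  intros Hxy; destruct (is_derive_mvt w d Hw x y Hxy) as [t [_ Ht]].
  pose proof (Hd t); nra.
Qed.

Lemma front_range z : 0 < w z < 1.
Proof.
  split.
  - assert (Hle : Rbar_le 0 (w (z - 1))).
    { apply (is_lim_le_loc w (fun _ => w (z - 1)) m_infty); [| exact Hminus | apply is_lim_const].
      exists (z - 1); intros y Hy; left; apply front_increasing, Hy. }
    simpl in Hle; pose proof (front_increasing (z - 1) z ltac:(lra)); lra.
  - assert (Hle : Rbar_le (w (z + 1)) 1).
    { apply (is_lim_le_loc (fun _ => w (z + 1)) w p_infty); [| apply is_lim_const | exact Hplus].
      exists (z + 1); intros y Hy; left; apply front_increasing, Hy. }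
    simpl in Hle; pose proof (front_increasing z (z + 1) ltac:(lra)); lra.
Qed.

Lemma Derive_h_front z : Derive h (w z) = Derive H (w z).
Proof.
  apply Derive_ext_loc; destruct (front_range z) as [H0 H1].
  exists (mkposreal _ (Rmin_pos _ _ H0 (proj2 (Rlt_0_minus _ _) H1))); intros y Hy.
  apply Hh; apply Rabs_def2 in Hy; unfold minus, plus, opp in Hy; simpl in Hy.
  pose proof (Rmin_l (w z) (1 - w z)); pose proof (Rmin_r (w z) (1 - w z)).
  lra.
Qed.

Lemma is_derive_front_energy z :
  is_derive (fun z => e * flux (d z) - c * w z - H (w z)) z (- f (clamp (w z))).
Proof.
  assert (Hval : e * Derive (fun y => flux (d y)) z - c * d z - Derive H (w z) * d z
                 = - f (clamp (w z))).
  { rewrite clamp_id by (pose proof (front_range z); lra).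
    pose proof (Hode z) as Hz; rewrite Derive_h_front in Hz; lra. }
  rewrite <- Hval.
  pose proof (is_derive_minus (fun z => e * flux (d z) - c * w z) (fun z => H (w z)) z _ _
    (is_derive_minus _ _ z _ _ (is_derive_scal _ z e _ (Derive_correct _ z (Hflux z)))
                               (is_derive_scal _ z c _ (Hw z)))
    (is_derive_comp H w z _ _ (Derive_correct _ _ (HH (w z))) (Hw z))) as HG.
  revert HG; unfold minus, plus, opp, scal; simpl; unfold mult; simpl.
  replace (e * Derive (fun y => flux (d y)) z + - (c * d z) + - (d z * Derive H (w z)))
    with (e * Derive (fun y => flux (d y)) z - c * d z - Derive H (w z) * d z) by ring.
  auto.
Qed.

Lemma front_energy a b :
  e * (flux (d b) - flux (d a)) - c * (w b - w a) - (H (w b) - H (w a))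
    = - RInt (fun z => f (clamp (w z))) a b.
Proof.
  pose proof (is_RInt_derive _ _ a b (fun x _ => is_derive_front_energy x)
    (fun x _ => continuous_opp _ x (continuous_comp w _ x (continuous_front x)
                                                     (continuous_f_clamp f HF (w x))))) as HI.
  apply (is_RInt_unique (V:=R_CompleteNormedModule)) in HI.
  rewrite (RInt_opp (V:=R_CompleteNormedModule)) in HI
    by apply (ex_RInt_f_clamp_comp f HF), continuous_front.
  revert HI; unfold minus, plus, opp; simpl; lra.
Qed.

(* Over a unit interval on which w varies by less than 2 s <= 1/2, the mean value theorem
   yields a point where w' <= 1/2, hence where the flux lies in [0, 1]. *)
Lemma front_flat_point x k s : 0 < s <= 1/4 ->
  (forall z, x <= z <= x + 1 -> Rabs (w z - k) < s) ->
  exists y, x <= y <= x + 1 /\ Rabs (w y - k) < s /\ 0 <= flux (d y) <= 1.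
Proof.
  intros Hs Hwk.
  destruct (is_derive_mvt w d Hw x (x + 1) ltac:(lra)) as [y [Hy Hdy]].
  exists y; split; [exact Hy | split; [apply Hwk, Hy | apply flux_bound]].
  pose proof (Rabs_def2 _ _ (Hwk x ltac:(lra))); pose proof (Rabs_def2 _ _ (Hwk (x + 1) ltac:(lra))).
  pose proof (Hd y); nra.
Qed.

Lemma front_speed_estimate s eta : 0 < e -> 0 < s <= 1/4 ->
  (forall z, -2 <= z <= 2 -> Rabs (w z - vbar z) < s) ->
  (forall y, Rabs (y - 1) < s -> Rabs (H y - H 1) < eta) ->
  (forall y, Rabs (y - 0) < s -> Rabs (H y - H 0) < eta) ->
  (forall x y, Rabs (x - y) < s -> Rabs (f (clamp x) - f (clamp y)) < eta) ->
  Rabs (c - (RInt f 0 1 - (H 1 - H 0))) <= e + 2 * s * Rabs c + 6 * eta.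
Proof.
  intros He Hs Hwv HH1 HH0 Hfs.
  destruct (front_flat_point (-2) 0 s Hs) as [a [Ha [Hwa Hfa]]].
  { intros z Hz; rewrite <- (vbar_left z) by lra; apply Hwv; lra. }
  destruct (front_flat_point 1 1 s Hs) as [b [Hb [Hwb Hfb]]].
  { intros z Hz; rewrite <- (vbar_right z) by lra; apply Hwv; lra. }
  pose proof (abs_RInt_f_clamp_sub_le f HF w vbar a b s eta ltac:(lra)
    continuous_front continuous_vbar Hfs (fun z Hz => Hwv z ltac:(lra))) as Hint.
  rewrite (RInt_f_clamp_vbar f HF a b) in Hint by lra.
  assert (Hc : Rabs (c * (1 - w b + w a)) <= Rabs c * (2 * s)).
  { rewrite Rabs_mult; apply Rmult_le_compat_l; [apply Rabs_pos|].
    apply Rabs_le; pose proof (Rabs_def2 _ _ Hwa); pose proof (Rabs_def2 _ _ Hwb); lra. }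
  assert (Hflux_diff : Rabs (e * (flux (d b) - flux (d a))) <= e).
  { rewrite Rabs_mult, Rabs_pos_eq by lra.
    assert (Rabs (flux (d b) - flux (d a)) <= 1) by (apply Rabs_le; lra).
    nra. }
  assert (HHab : Rabs ((H 1 - H (w b)) - (H 0 - H (w a))) <= 2 * eta).
  { pose proof (Rabs_def2 _ _ (HH1 _ Hwb)); pose proof (Rabs_def2 _ _ (HH0 _ Hwa)).
    apply Rabs_le; lra. }
  assert (Heta : 0 < eta).
  { apply (Rle_lt_trans _ _ _ (Rabs_pos (H 1 - H 1))), HH1.
    rewrite Rminus_diag, Rabs_R0; lra. }
  assert (Hint4 : (b - a) * eta <= 4 * eta) by (apply Rmult_le_compat_r; lra).
  set (I := RInt (fun z => f (clamp (w z))) a b) in *.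
  replace (c - (RInt f 0 1 - (H 1 - H 0)))
    with (c * (1 - w b + w a) + e * (flux (d b) - flux (d a))
          + ((H 1 - H (w b)) - (H 0 - H (w a))) + (I - RInt f 0 1))
    by (pose proof (front_energy a b) as E; fold I in E; lra).
  eapply Rle_trans; [apply Rabs_triang|]; eapply Rle_trans;
    [apply Rplus_le_compat_r, Rabs_triang|]; eapply Rle_trans;
    [apply Rplus_le_compat_r, Rplus_le_compat_r, Rabs_triang|].
  lra.
Qed.

End FrontProfile.

Theorem corollary4 (f h : R -> R) (cbar : R) (eps : nat -> R) (v : nat -> R -> R) :
  hypF f -> hypH h ->
  crit_speed_limit f h cbar ->
  (forall n, 0 < eps n) -> is_lim_seq eps 0 ->
  (forall n, critical_profile f h (eps n) (v n)) ->
  cv_loc_unif v vbar ->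
  cbar = RInt f 0 1 - h 1.
Proof.
  intros HF [H [HH [_ [_ [Hh [Hh0 _]]]]]] Hlim Hpos Heps Hcrit Hcv.
  assert (HcH : forall x, continuous H x)
    by (intro; apply (ex_derive_continuous (V:=R_NormedModule)), HH).
  replace (RInt f 0 1 - h 1) with (RInt f 0 1 - (H 1 - H 0))
    by (rewrite <- (Hh 0), <- (Hh 1), Hh0 by lra; ring).
  apply Rminus_diag_uniq, (eq0_of_abs_le_small _ (2 * Rabs cbar + 12)).
  { pose proof (Rabs_pos cbar); lra. }
  intros eta [Heta Heta4].
  destruct (front_speed_moduli f HF H eta Heta HcH) as [s [Hs [HH1 [HH0 Hfs]]]].
  destruct (Hcv (-2) 2 s (proj1 Hs)) as [N1 HN1].
  destruct (Hlim eta Heta) as [delta [Hdelta Hspeed]].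
  destruct (is_lim_seq_0_eventually_lt eps _ Heps (Rmin_pos _ _ Hdelta Heta)) as [N2 HN2].
  set (n := max N1 N2).
  assert (Hen : 0 < eps n < delta /\ eps n < eta).
  { pose proof (HN2 n (Nat.le_max_r _ _)); pose proof (Rmin_l delta eta).
    pose proof (Rmin_r delta eta); pose proof (Hpos n); lra. }
  destruct (Hcrit n) as [c [Hcs [d [Hw [_ [Hd [_ [Hflux [Hode [Hm Hp]]]]]]]]]].
  destruct (Hspeed (eps n) (proj1 Hen)) as [c' [Hcs' Hc]].
  rewrite Hcs in Hcs'; injection Hcs' as <-.
  pose proof (front_speed_estimate f h H (eps n) c (v n) d HF HH Hh Hw Hd Hflux Hode Hm Hp
    s eta (Hpos n) ltac:(lra) (HN1 n (Nat.le_max_l _ _)) HH1 HH0 Hfs) as Hest.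
  assert (Hsc : s * Rabs c <= eta * (Rabs cbar + eta)).
  { pose proof (Rabs_triang_inv c cbar).
    apply Rmult_le_compat; [lra | apply Rabs_pos | lra | lra]. }
  replace (cbar - (RInt f 0 1 - (H 1 - H 0)))
    with ((cbar - c) + (c - (RInt f 0 1 - (H 1 - H 0)))) by ring.
  eapply Rle_trans; [apply Rabs_triang|].
  rewrite <- Rabs_Ropp, Ropp_minus_distr in Hc.
  pose proof (Rabs_pos cbar); nra.
Qed.
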